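(* Let $\mathcal H$ be a separable Hilbert space, let $(X,\mu)$ be a measure space, and let $\{\phi_t\}_{t\in X}$ be a continuous Bessel family over $X$ in $\mathcal H$. Then its support $\{t\in X: \phi_t\neq 0\}$ is a $\sigma$-finite subset of $X$, i.e. a countable union of measurable sets of finite measure.
   Context: A family $\{\phi_t\}_{t\in X}$ of vectors in $\mathcal H$ is a continuous Bessel family (with bound $B$) over the measure space $(X,\mu)$ if (i) for each $f\in\mathcal H$ the function $t\mapsto\langle f,\phi_t\rangle$ is measurable, and (ii) there is $B<\infty$ with $\int_X|\langle f,\phi_t\rangle|^2\,d\mu(t)\le B\|f\|^2$ for all $f\in\mathcal H$. *)

From HB Require Import structures.
From mathcomp Require Import all_boot all_order all_algebra.
From mathcomp Require Import all_classical all_reals all_analysis.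
From mathcomp Require Import complex.
Set Implicit Arguments. Unset Strict Implicit. Unset Printing Implicit Defensive.
Import Order.TTheory GRing.Theory Num.Theory.
Local Open Scope ring_scope.
Local Open Scope classical_set_scope.

Definition is_inner_product (R : realType) (H : lmodType R[i])
    (ip : H -> H -> R[i]) : Prop :=
  [/\ (forall (a : R[i]) (x y z : H), ip (a *: x + y) z = a * ip x z + ip y z),
      (forall x y : H, ip y x = (ip x y)^*),
      (forall x : H, 0 <= complex.Re (ip x x)) &
      (forall x : H, ip x x = 0 -> x = 0)].

Definition hnorm (R : realType) (H : lmodType R[i]) (ip : H -> H -> R[i])
    (x : H) : R :=
  Num.sqrt (complex.Re (ip x x)).

Definition hcomplete (R : realType) (H : lmodType R[i])
    (ip : H -> H -> R[i]) : Prop :=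
  forall u : nat -> H,
    (forall e : R, 0 < e -> exists N : nat, forall m n : nat,
        (N <= m)%N -> (N <= n)%N -> hnorm ip (u m - u n) < e) ->
    exists x : H, forall e : R, 0 < e -> exists N : nat, forall n : nat,
        (N <= n)%N -> hnorm ip (u n - x) < e.

Definition hseparable (R : realType) (H : lmodType R[i])
    (ip : H -> H -> R[i]) : Prop :=
  exists D : nat -> H, forall (x : H) (e : R), 0 < e ->
    exists n : nat, hnorm ip (x - D n) < e.

Definition hilbert_space (R : realType) (H : lmodType R[i])
    (ip : H -> H -> R[i]) : Prop :=
  is_inner_product ip /\ hcomplete ip.

Definition csq (R : realType) (z : R[i]) : R :=
  complex.Re z ^+ 2 + complex.Im z ^+ 2.

(* Continuous Bessel family {phi_t}_{t in X} over (X, mu) in H.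
   (i) measurability of t |-> <f, phi_t> (i.e. of its real and imaginary
       parts, R[i] being identified with R^2 with its Borel structure);
   (ii) there is a finite B with  int_X |<f,phi_t>|^2 dmu <= B ||f||^2. *)
Definition continuous_bessel_family (R : realType) (H : lmodType R[i])
    (ip : H -> H -> R[i]) (d : measure_display) (X : measurableType d)
    (mu : {measure set X -> \bar R}) (phi : X -> H) : Prop :=
  (forall f : H,
      measurable_fun setT (fun t => complex.Re (ip f (phi t))) /\
      measurable_fun setT (fun t => complex.Im (ip f (phi t)))) /\
  exists B : R, forall f : H,
    (\int[mu]_(t in setT) (csq (ip f (phi t)))%:E
       <= (B * hnorm ip f ^+ 2)%:E)%E.

From HB Require Import structures.
From mathcomp Require Import all_boot all_order all_algebra.
From mathcomp Require Import all_classical all_reals all_analysis.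
From mathcomp Require Import complex.
From mathcomp Require Import lra measurable_realfun.
Set Implicit Arguments.
Unset Strict Implicit.
Unset Printing Implicit Defensive.

(* Let (D n) be dense in H.  A nonzero vector p cannot be orthogonal to every
   D n, since then ||p - D n||^2 = ||p||^2 + ||D n||^2 >= ||p||^2.  Hence the
   support of phi is the union over n, k of the sets
   {t | |<D n, phi t>|^2 >= 1/(k+1)}, and each of them has finite measure by
   Markov's inequality, because t |-> |<D n, phi t>|^2 has integral at most
   B ||D n||^2. *)

Import Order.TTheory GRing.Theory Num.Theory.
Local Open Scope ring_scope.
Local Open Scope classical_set_scope.

Section InnerProduct.
Variables (R : realType) (H : lmodType R[i]) (ip : H -> H -> R[i]).
Hypothesis ipH : is_inner_product ip.

Lemma ipBl (x y z : H) : ip (x - y) z = ip x z - ip y z.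
Proof. by case: ipH => lin _ _ _; rewrite addrC -scaleN1r lin mulN1r addrC. Qed.

Lemma ipC (x y : H) : ip y x = (ip x y)^*.
Proof. by case: ipH. Qed.

Lemma ipBr (x y z : H) : ip z (x - y) = ip z x - ip z y.
Proof. by rewrite ipC ipBl rmorphB /= -!ipC. Qed.

Lemma ip0r (x : H) : ip x 0 = 0.
Proof. by rewrite -(subrr x) ipBr subrr. Qed.

Lemma ip_self_real (x : H) : complex.Im (ip x x) = 0.
Proof.
have := ipC x x; case: (ip x x) => a b /(congr1 (@complex.Im R)) /=; lra.
Qed.

Lemma ip_self_gt0 (x : H) : x != 0 -> 0 < complex.Re (ip x x).
Proof.
case: ipH => _ _ pos def x0; rewrite lt_neqAle pos andbT.
apply: contra x0 => /eqP re0; apply/eqP/def.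
by move: re0 (ip_self_real x); case: (ip x x) => a b /= <- ->.
Qed.

Lemma dense_not_orthogonal (D : nat -> H) :
    (forall (x : H) (e : R), 0 < e -> exists n, hnorm ip (x - D n) < e) ->
  forall p : H, p != 0 -> exists n, ip (D n) p != 0.
Proof.
move=> Ddense p p0; apply/not_existsP => /= orthD.
have ipDp n : ip (D n) p = 0 by apply/eqP/negPn/negP; exact: orthD.
have ippD n : ip p (D n) = 0 by rewrite ipC ipDp conjC0.
have pgt0 : 0 < complex.Re (ip p p) by exact: ip_self_gt0.
have [n] := Ddense p (Num.sqrt (complex.Re (ip p p))) ltac:(by rewrite sqrtr_gt0).
rewrite /hnorm ltr_sqrt // ipBl !ipBr ipDp ippD subr0 sub0r opprK raddfD /=.
case: ipH => _ _ pos _; have := pos (D n); lra.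
Qed.

End InnerProduct.

Lemma csq_ge0 (R : realType) (z : R[i]) : 0 <= csq z.
Proof. by rewrite /csq addr_ge0 // sqr_ge0. Qed.

Lemma csq_gt0 (R : realType) (z : R[i]) : z != 0 -> 0 < csq z.
Proof.
move=> z0; rewrite lt_neqAle csq_ge0 andbT; apply: contra z0.
case: z => a b; rewrite /csq /= eq_sym paddr_eq0 ?sqr_ge0 // !sqrf_eq0.
by case/andP => /eqP -> /eqP ->.
Qed.

Lemma csq0 (R : realType) : csq (0 : R[i]) = 0.
Proof. by rewrite /csq /= expr0n addr0. Qed.

Lemma measurable_csq d (X : measurableType d) (R : realType) (g : X -> R[i]) :
    measurable_fun setT (fun t => complex.Re (g t)) ->
    measurable_fun setT (fun t => complex.Im (g t)) ->
  measurable_fun setT (fun t => csq (g t)).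
Proof. by move=> mRe mIm; apply: measurable_funD; apply: measurable_funX. Qed.

Lemma measure_ge_lty d (X : measurableType d) (R : realType)
    (mu : {measure set X -> \bar R}) (g : X -> R) (a : R) :
    0 < a -> measurable_fun setT g -> (forall t, 0 <= g t) ->
    (\int[mu]_(t in setT) (g t)%:E < +oo)%E ->
  (mu [set t | (a <= g t)%R] < +oo)%E.
Proof.
move=> a0 mg g0 intg.
have mEg : measurable_fun setT (EFin \o g) by exact/measurable_EFinP.
have := le_integral_comp_abse mu measurableT (@measurable_id _ _ setT)
  (fun _ r0 => r0) (fun _ _ _ _ => id) mEg a0.
rewrite setTI /=.
have absg t : `|g t| = g t by rewrite ger0_norm.
under eq_set do rewrite absg.
under eq_integral do rewrite absg.
under eq_set do rewrite lee_fin.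
move=> /le_lt_trans/(_ intg).
by case: (mu _) => [r| |] //; rewrite ?ltry // gt0_muley ?lte_fin.
Qed.

Section CoefficientLevelSets.
Variables (R : realType) (H : lmodType R[i]) (ip : H -> H -> R[i]).
Variables (d : measure_display) (X : measurableType d) (phi : X -> H).
Variable D : nat -> H.

(* [m] enumerates the pairs [(n, k)] through [unpickle]. *)
Definition coef_level_set (m : nat) : set X :=
  if unpickle m is Some (n, k)
  then [set t | k.+1%:R^-1 <= csq (ip (D n) (phi t))]
  else set0.

Lemma measurable_coef_level_set m :
    (forall f : H,
      measurable_fun setT (fun t => complex.Re (ip f (phi t))) /\
      measurable_fun setT (fun t => complex.Im (ip f (phi t)))) ->
  measurable (coef_level_set m).
Proof.
move=> mcoef; rewrite /coef_level_set; case: (unpickle m) => [[n k]|] //.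
have [mRe mIm] := mcoef (D n).
rewrite -[X in measurable X]setTI -preimage_itvcy.
by apply: (measurable_csq mRe mIm) => //; exact: measurable_itv.
Qed.

Lemma coef_level_set_lty (mu : {measure set X -> \bar R}) m :
  continuous_bessel_family ip mu phi -> (mu (coef_level_set m) < +oo)%E.
Proof.
move=> [mcoef [B bessel]]; rewrite /coef_level_set.
case: (unpickle m) => [[n k]|]; last by rewrite measure0.
have [mRe mIm] := mcoef (D n).
apply: measure_ge_lty (measurable_csq mRe mIm) _ _; first by rewrite invr_gt0.
  by move=> t; exact: csq_ge0.
by apply: le_lt_trans (bessel (D n)) _; rewrite ltry.
Qed.

Lemma support_eq_bigcup_coef_level_set :
    is_inner_product ip ->
    (forall (x : H) (e : R), 0 < e -> exists n, hnorm ip (x - D n) < e) ->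
  [set t | phi t != 0] = \bigcup_m coef_level_set m.
Proof.
move=> ipH Ddense; apply/seteqP; split => t /=.
  move=> /(dense_not_orthogonal ipH Ddense) [n /csq_gt0 coef_gt0].
  have [k] := ltr_add_invr coef_gt0; rewrite add0r => /ltW lek.
  by exists (pickle (n, k)) => //; rewrite /coef_level_set pickleK.
case=> m _; rewrite /coef_level_set; case: (unpickle m) => [[n k]|] //=.
by apply: contraTN => /eqP ->; rewrite ip0r // csq0 -ltNge invr_gt0 ltr0Sn.
Qed.

End CoefficientLevelSets.

Theorem proposition2p1 (R : realType) (H : lmodType R[i])
    (ip : H -> H -> R[i]) (d : measure_display) (X : measurableType d)
    (mu : {measure set X -> \bar R}) (phi : X -> H) :
  hilbert_space ip -> hseparable ip ->
  continuous_bessel_family ip mu phi ->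
  exists F : nat -> set X,
    (forall n : nat, measurable (F n) /\ (mu (F n) < +oo)%E) /\
    [set t | phi t != 0] = \bigcup_n F n.
Proof.
move=> [ipH _] [D Ddense] bessel.
exists (coef_level_set ip phi D); split.
  move=> m; split; last exact: coef_level_set_lty.
  by apply: measurable_coef_level_set; case: bessel.
exact: support_eq_bigcup_coef_level_set.
Qed.
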